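(* Let $n\ge2$ and $j\in\{1,\dots,n+1\}$. Let $X_1,\dots,X_j\in\{0,1\}^n$ be distinct strings such that the vectors $|P(X_1)\rangle_1,\dots,|P(X_j)\rangle_1$ are linearly independent. Then the number of strings $Y\in\{0,1\}^n\setminus\{X_1,\dots,X_j\}$ such that $|P(Y)\rangle_1$ lies in the linear span of $|P(X_1)\rangle_1,\dots,|P(X_j)\rangle_1$ is at most $2^{j-1}-j$.
   Context: For $x\in\{0,1\}^n$, $|P(x)\rangle_1=(1,x_1,\dots,x_n)^T\in\mathbb{R}^{n+1}$. *)

From HB Require Import structures.
From mathcomp Require Import all_boot all_order all_algebra.
From mathcomp Require Import reals.
Set Implicit Arguments. Unset Strict Implicit. Unset Printing Implicit Defensive.
Import Order.TTheory GRing.Theory Num.Theory.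
Local Open Scope ring_scope.

Definition bitstring (n : nat) := {ffun 'I_n -> bool}.

(* |P(x)>_1 = (1, x_1, ..., x_n)^T in R^(n+1), as a row vector
   (index 0 carries the constant 1, index i+1 carries x_i). *)
Definition P1 (R : realType) (n : nat) (x : bitstring n) : 'rV[R]_(n.+1) :=
  \row_(k < n.+1) (if unlift ord0 k is Some i then (x i)%:R else 1).

From HB Require Import structures.
From mathcomp Require Import all_boot all_order all_algebra.
From mathcomp Require Import reals.
Set Implicit Arguments. Unset Strict Implicit. Unset Printing Implicit Defensive.
Import Order.TTheory GRing.Theory Num.Theory.
Local Open Scope ring_scope.

(* Write p_i = |P(X_i)>_1, i = 0..j-1.  Every p_i has first
   coordinate 1, so a vector v of the span <<p_0,...,p_{j-1}>> with first
   coordinate 1 satisfies v - p_0 \in rowspace W, where W is the (j-1)-row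
   matrix with rows p_i - p_0.  Hence the set S of strings Y with P(Y) in the
   span is a set of 0/1-vectors whose pairwise differences lie in a space of
   dimension r = rank W <= j-1.  Such a set has at most 2^r elements: a space
   of rank r admits r coordinates that determine its vectors, and two 0/1
   vectors agreeing on these r coordinates have a difference in the space
   vanishing on them, hence are equal.  Finally S contains the j strings X_i,
   so at most 2^(j-1) - j strings of S are not among them. *)

Section ZeroOneVectors.
Variable K : fieldType.

(* The columns selected by maxrankfun B^T form a column basis of B: a vector
   of the row space of B vanishing on them is zero. *)
Lemma rowspace_colsub_maxrank_eq0 k m (B : 'M[K]_(k, m)) (v : 'rV[K]_m) :
  (v <= B)%MS -> colsub (maxrankfun B^T) v = 0 -> v = 0.
Proof.
set f := maxrankfun B^T => /submxP [a ->] fv0.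
have /submxP [E dE] : (B^T <= rowsub f B^T)%MS by rewrite eq_maxrowsub.
have dB : B = colsub f B *m E^T.
  have -> : colsub f B = (rowsub f B^T)^T by apply/matrixP => i l; rewrite !mxE.
  by rewrite -trmx_mul -dE trmxK.
by rewrite dB mulmxA mulmx_colsub fv0 mul0mx.
Qed.

Lemma card_le_exp2_rank (T : finType) k m (B : 'M[K]_(k, m))
    (g : T -> 'rV[K]_m) (S : {set T}) :
  {in S &, injective g} -> (forall y i, g y 0 i = 0 \/ g y 0 i = 1) ->
  {in S &, forall y y', (g y - g y' <= B)%MS} -> (#|S| <= 2 ^ \rank B)%N.
Proof.
move=> g_inj g01 gB.
pose f := maxrankfun B^T.
pose trace y : {ffun 'I_(\rank B^T) -> bool} := [ffun i => g y 0 (f i) == 1].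
have trace_inj : {in S &, injective trace}.
  move=> y y' yS y'S same_trace; apply: g_inj => //.
  apply/eqP; rewrite -subr_eq0; apply/eqP.
  apply: rowspace_colsub_maxrank_eq0 (gB y y' yS y'S) _.
  apply/matrixP => a l; rewrite [a]ord1 !mxE.
  have := congr1 (fun F : {ffun _ -> bool} => F l) same_trace; rewrite !ffunE.
  have [->|->] := g01 y (f l); have [->|->] := g01 y' (f l);
    by rewrite ?eqxx ?subrr // eq_sym oner_eq0.
rewrite -(card_in_imset trace_inj); apply: leq_trans (max_card _) _.
by rewrite card_ffun card_bool card_ord mxrank_tr.
Qed.

End ZeroOneVectors.

Section AffineSpan.
Variables (K : fieldType) (m j : nat) (F : 'I_j.+1 -> 'rV[K]_m.+1).

Definition diffmx : 'M[K]_(j, m.+1) :=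
  \matrix_(k < j) (F (lift ord0 k) - F ord0).

Hypothesis F_first : forall i, F i 0 0 = 1.

(* A vector v of the span of the F i satisfies v - v_0 F 0 \in rowspace diffmx:
   the coefficient of F 0 is forced by the first coordinates. *)
Lemma span_sub_diffmx (v : 'rV[K]_m.+1) :
  v \in <<[seq F i | i : 'I_j.+1]>>%VS ->
  (v - v 0 0 *: F ord0 <= diffmx)%MS.
Proof.
set s := [seq F i | i : 'I_j.+1] => vs.
have F_diff i : (F i - F ord0 <= diffmx)%MS.
  case: (unliftP ord0 i) => [k ->|->]; last by rewrite subrr sub0mx.
  by rewrite -[_ - _](rowK (fun k => F (lift ord0 k) - F ord0) k) row_sub.
rewrite (coord_span (X := in_tuple s) vs) /=.
apply: (big_ind (fun u : 'rV[K]_m.+1 => (u - u 0 0 *: F ord0 <= diffmx)%MS)).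
- by rewrite mxE scale0r subrr sub0mx.
- move=> u w hu hw; rewrite mxE scalerDl opprD addrACA.
  exact: addmx_sub.
- move=> i _; rewrite mxE -scalerA -scalerBr; apply: scalemx_sub.
  have /mapP [k _ ->] : s`_i \in s by exact: mem_nth.
  by rewrite F_first scale1r.
Qed.

Lemma span_diff_sub_diffmx (u v : 'rV[K]_m.+1) :
  u \in <<[seq F i | i : 'I_j.+1]>>%VS -> v \in <<[seq F i | i : 'I_j.+1]>>%VS ->
  u 0 0 = 1 -> v 0 0 = 1 -> (u - v <= diffmx)%MS.
Proof.
move=> /span_sub_diffmx du /span_sub_diffmx dv u1 v1.
rewrite u1 v1 scale1r in du dv.
have -> : u - v = (u - F ord0) + - (v - F ord0) by rewrite opprB addrA subrK.
by apply: addmx_sub; rewrite ?eqmx_opp.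
Qed.

End AffineSpan.

Section EmbeddingP1.
Variables (R : realType) (n : nat).

Lemma P1_first (Y : bitstring n) : P1 R Y 0 0 = 1.
Proof. by rewrite mxE unlift_none. Qed.

Lemma P1_01 (Y : bitstring n) i : P1 R Y 0 i = 0 \/ P1 R Y 0 i = 1.
Proof.
rewrite mxE; case: unlift => [a|]; last by right.
by case: (Y a); [right|left].
Qed.

Lemma P1_inj : injective (@P1 R n).
Proof.
move=> Y Y' eqP1; apply/ffunP => i.
have := congr1 (fun M : 'rV[R]_n.+1 => M 0 (lift ord0 i)) eqP1.
rewrite !mxE liftK.
by case: (Y i); case: (Y' i) => //= /eqP; rewrite ?oner_eq0 // eq_sym oner_eq0.
Qed.

Lemma card_span_P1 j (X : 'I_j.+1 -> bitstring n) :
  (#|[set Y : bitstring n | P1 R Y \in <<[seq P1 R (X i) | i : 'I_j.+1]>>%VS]|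
     <= 2 ^ j)%N.
Proof.
set S := [set Y | _].
have diff_sub : {in S &, forall y y',
    (P1 R y - P1 R y' <= diffmx (fun i => P1 R (X i)))%MS}.
  move=> y y'; rewrite !inE => yS y'S.
  by apply: span_diff_sub_diffmx => //; [move=> i|..]; rewrite P1_first.
apply: leq_trans (card_le_exp2_rank (in2W P1_inj) P1_01 diff_sub) _.
by rewrite leq_exp2l // rank_leq_row.
Qed.

End EmbeddingP1.

Theorem lemma4 (R : realType) (n j : nat) (X : 'I_j -> bitstring n) :
  (2 <= n)%N -> (1 <= j <= n.+1)%N ->
  injective X ->
  free [seq P1 R (X i) | i : 'I_j] ->
  (#|[set Y : bitstring n | (Y \notin [seq X i | i : 'I_j]) &&
       (P1 R Y \in <<[seq P1 R (X i) | i : 'I_j]>>%VS)]|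
     <= 2 ^ j.-1 - j)%N.
Proof.
case: j X => [|j] X _ _ X_inj _ //=.
set span := <<[seq P1 R (X i) | i : 'I_j.+1]>>%VS.
set New := [set Y | _ && _].
pose S := [set Y : bitstring n | P1 R Y \in span].
pose I := [set X i | i : 'I_j.+1].
have I_sub_S : I \subset S.
  apply/subsetP => _ /imsetP [i _ ->]; rewrite inE.
  by apply: memv_span; apply: map_f; rewrite mem_enum.
have new_sub : New \subset S :\: I.
  apply/subsetP => Y; rewrite !inE => /andP [notX ->]; rewrite andbT.
  by apply: contra notX => /imsetP [i _ ->]; rewrite map_f ?mem_enum.
apply: leq_trans (subset_leq_card new_sub) _.
rewrite cardsD (setIidPr I_sub_S) card_imset // card_ord.
exact: leq_sub2r (card_span_P1 R X).
Qed.
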